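(* Let $(E_{-1},E_0,\partial,\rho,S,\circ,\Omega)$ be an $\mathrm{LWX}$ $2$-algebroid over $M$, with $[\![\cdot,\cdot]\!]$, $J$ as below. For all $e^1\in\Gamma(E_{-1})$ and $e^0_1,e^0_2,e^0_3,e^0_4\in\Gamma(E_0)$: $$\Omega([\![e^0_1,e^0_2]\!],e^0_3,e^0_4)-\Omega([\![e^0_1,e^0_3]\!],e^0_2,e^0_4)+\Omega([\![e^0_1,e^0_4]\!],e^0_2,e^0_3)+\Omega([\![e^0_2,e^0_3]\!],e^0_1,e^0_4)-\Omega([\![e^0_2,e^0_4]\!],e^0_1,e^0_3)+\Omega([\![e^0_3,e^0_4]\!],e^0_1,e^0_2)$$ $$-[\![\Omega(e^0_1,e^0_2,e^0_3),e^0_4]\!]-[\![\Omega(e^0_1,e^0_3,e^0_4),e^0_2]\!]+[\![\Omega(e^0_1,e^0_2,e^0_4),e^0_3]\!]+[\![\Omega(e^0_2,e^0_3,e^0_4),e^0_1]\!]+\mathcal D S(\Omega(e^0_1,e^0_2,e^0_3),e^0_4)=0,$$ and $2\mathbf J+\mathbf K=-S(\Omega(\partial e^1,e^0_2,e^0_3),e^0_4)$, where $$\mathbf J=S(J(e^1,e^0_2,e^0_3),e^0_4)-S(J(e^1,e^0_2,e^0_4),e^0_3)+S(J(e^1,e^0_3,e^0_4),e^0_2)+3S(\Omega(\partial e^1,e^0_2,e^0_3),e^0_4),$$ $$\mathbf K=S([\![e^1,e^0_2]\!],[\![e^0_3,e^0_4]\!])-S([\![e^1,e^0_3]\!],[\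![e^0_2,e^0_4]\!])+S([\![e^1,e^0_4]\!],[\![e^0_2,e^0_3]\!]).$$
   Context: A Leibniz $2$-algebra $(V_{-1},V_0,d,l_2,l_3)$ consists of a complex of real vector spaces $d:V_{-1}\to V_0$, bilinear maps $l_2:V_{-i}\times V_{-j}\to V_{-i-j}$ for $0\le i+j\le 1$, and a trilinear map $l_3:V_0\times V_0\times V_0\to V_{-1}$ such that for all $w,x,y,z\in V_0$, $m,n\in V_{-1}$: (a) $d\,l_2(x,m)=l_2(x,dm)$; (b) $d\,l_2(m,x)=l_2(dm,x)$; (c) $l_2(dm,n)=l_2(m,dn)$; (d) $d\,l_3(x,y,z)=l_2(x,l_2(y,z))-l_2(l_2(x,y),z)-l_2(y,l_2(x,z))$; (e1) $l_3(x,y,dm)=l_2(x,l_2(y,m))-l_2(l_2(x,y),m)-l_2(y,l_2(x,m))$; (e2) $l_3(x,dm,y)=l_2(x,l_2(m,y))-l_2(l_2(x,m),y)-l_2(m,l_2(x,y))$; (e3) $l_3(dm,x,y)=l_2(m,l_2(x,y))-l_2(l_2(m,x),y)-l_2(x,l_2(m,y))$; (f) $l_2(w,l_3(x,y,z))-l_2(x,l_3(w,y,z))+l_2(y,l_3(w,x,z))+l_2(l_3(w,x,y),z)-l_3(l_2(w,x),y,z)-l_3(x,l_2(w,y),z)-l_3(x,y,l_2(w,z))+l_3(w,l_2(x,y),z)+l_3(w,y,l_2(x,z))-l_3(w,x,l_2(y,z))=0$. An $\mathrm{LWX}$ $2$-algebroid $(E_{-1},E_0,\partial,\rho,S,\circ,\Omega)$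 over a manifold $M$ consists of vector bundles $E_{-1},E_0$ over $M$ with $\mathcal E=E_{-1}\oplus E_0$; a nondegenerate symmetric bilinear form $S$ on $\mathcal E$ for which $E_0$ and $E_{-1}$ are both isotropic; an $\mathbb R$-bilinear operation $\circ$ on $\Gamma(\mathcal E)$ mapping $\Gamma(E_{-i})\times\Gamma(E_{-j})\to\Gamma(E_{-(i+j)})$ for $0\le i+j\le 1$ (and zero on $\Gamma(E_{-1})\times\Gamma(E_{-1})$), skew-symmetric on $\Gamma(E_0)\times\Gamma(E_0)$; an $E_{-1}$-valued $3$-form $\Omega$ on $E_0$; bundle maps $\partial:E_{-1}\to E_0$ and $\rho:E_0\to TM$ ($\rho$ is extended by zero to $E_{-1}$); such that: (i) $(\Gamma(E_{-1}),\Gamma(E_0),\partial,\circ,\Omega)$ is a Leibniz $2$-algebra (with $d=\partial$, $l_2=\circ$, $l_3=\Omega$); (ii) $e\circ e=\frac12\mathcal D S(e,e)$ for all $e\in\Gamma(\mathcal E)$, where $\mathcal D:C^\infty(M)\to\Gamma(E_{-1})$ is defined by $S(\mathcal D f,e^0)=\rho(e^0)(f)$ for all $e^0\in\Gamma(E_0)$; (iii) $S(\partial e^1_1,e^1_2)=S(e^1_1,\partial e^1_2)$ for $e^1_1,e^1_2\in\Gamma(E_{-1})$; (iv) $\rho(e_1)S(e_2,e_3)=S(e_1\circ e_2,e_3)+S(e_2,e_1\circ e_3)$ for all $e_1,e_2,e_3\in\Gamma(\mathcal E)$; (v) $S(\Omega(e^0_1,e^0_2,e^0_3),e^0_4)=-S(e^0_3,\Omega(e^0_1,e^0_2,e^0_4))$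 for all $e^0_i\in\Gamma(E_0)$. Notation: $[\![e_1,e_2]\!]=\frac12(e_1\circ e_2-e_2\circ e_1)$ for $e_1,e_2\in\Gamma(\mathcal E)$, and $J(e_1,e_2,e_3)=[\![[\![e_1,e_2]\!],e_3]\!]+[\![[\![e_2,e_3]\!],e_1]\!]+[\![[\![e_3,e_1]\!],e_2]\!]$. *)

From HB Require Import structures.
From mathcomp Require Import all_boot all_order all_algebra.
Set Implicit Arguments. Unset Strict Implicit. Unset Printing Implicit Defensive.
Import GRing.Theory.
Local Open Scope ring_scope.

(* R     : the real scalars (a real field)
   A     : the commutative R-algebra C^oo(M) of smooth functions
   V1    : the A-module Gamma(E_{-1}) of sections of E_{-1}
   V0    : the A-module Gamma(E_0) of sections of E_0
   Sections of calE = E_{-1} (+) E_0 are pairs (V1 * V0).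
   Real scalars act on sections through r%:A. *)

Section LWX.
Variables (R : realFieldType) (A : comAlgType R) (V1 V0 : lmodType A).

Local Notation E := (V1 * V0)%type.

Definition in1 (x : V1) : E := (x, 0).
Definition in0 (y : V0) : E := (0, y).

Definition Rlinear (U W : lmodType A) (f : U -> W) : Prop :=
  forall (r : R) x y, f (r%:A *: x + y) = r%:A *: f x + f y.

Definition Alinear (U W : lmodType A) (f : U -> W) : Prop :=
  forall (a : A) x y, f (a *: x + y) = a *: f x + f y.

(* Given the graded components of the operation o on Gamma(calE):
     c00 : Gamma(E_0)    x Gamma(E_0)    -> Gamma(E_0)
     c01 : Gamma(E_0)    x Gamma(E_{-1}) -> Gamma(E_{-1})
     c10 : Gamma(E_{-1}) x Gamma(E_0)    -> Gamma(E_{-1})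
   (zero on Gamma(E_{-1}) x Gamma(E_{-1})), the bilinear extension to calE: *)
Definition circE (c00 : V0 -> V0 -> V0) (c01 : V0 -> V1 -> V1)
  (c10 : V1 -> V0 -> V1) (e e' : E) : E :=
  (c10 e.1 e'.2 + c01 e.2 e'.1, c00 e.2 e'.2).

Definition brk c00 c01 c10 (e e' : E) : E :=
  (2^-1 : R)%:A *: (circE c00 c01 c10 e e' - circE c00 c01 c10 e' e).

Definition Jac c00 c01 c10 (e1 e2 e3 : E) : E :=
  brk c00 c01 c10 (brk c00 c01 c10 e1 e2) e3
  + brk c00 c01 c10 (brk c00 c01 c10 e2 e3) e1
  + brk c00 c01 c10 (brk c00 c01 c10 e3 e1) e2.

(* Leibniz 2-algebra (V_{-1},V_0,d,l2,l3) with l2 given by its components *)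
Definition Leibniz2 (d : V1 -> V0) (c00 : V0 -> V0 -> V0) (c01 : V0 -> V1 -> V1)
  (c10 : V1 -> V0 -> V1) (l3 : V0 -> V0 -> V0 -> V1) : Prop :=
  Rlinear d /\
  (forall x, Rlinear (c00 x)) /\ (forall y, Rlinear (fun x => c00 x y)) /\
  (forall x, Rlinear (c01 x)) /\ (forall m, Rlinear (fun x => c01 x m)) /\
  (forall m, Rlinear (c10 m)) /\ (forall x, Rlinear (fun m => c10 m x)) /\
  (forall x y, Rlinear (l3 x y)) /\ (forall x z, Rlinear (fun y => l3 x y z)) /\
  (forall y z, Rlinear (fun x => l3 x y z)) /\
  (forall x m, d (c01 x m) = c00 x (d m)) /\
  (forall m x, d (c10 m x) = c00 (d m) x) /\
  (forall m n, c01 (d m) n = c10 m (d n)) /\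
  (* (d) *) (forall x y z,
     d (l3 x y z) = c00 x (c00 y z) - c00 (c00 x y) z - c00 y (c00 x z)) /\
  (* (e1) *) (forall x y m,
     l3 x y (d m) = c01 x (c01 y m) - c01 (c00 x y) m - c01 y (c01 x m)) /\
  (forall x y m,
     l3 x (d m) y = c01 x (c10 m y) - c10 (c01 x m) y - c10 m (c00 x y)) /\
  (forall x y m,
     l3 (d m) x y = c10 m (c00 x y) - c10 (c10 m x) y - c01 x (c10 m y)) /\
  (* (f) *) (forall w x y z,
     c01 w (l3 x y z) - c01 x (l3 w y z) + c01 y (l3 w x z) + c10 (l3 w x y) z
     - l3 (c00 w x) y z - l3 x (c00 w y) z - l3 x y (c00 w z)
     + l3 w (c00 x y) z + l3 w y (c00 x z) - l3 w x (c00 y z) = 0).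

(* The LWX 2-algebroid axioms, for data
   (E_{-1},E_0, partial = d, rho, S, o = (c00,c01,c10), Omega),
   together with the map D : C^oo(M) -> Gamma(E_{-1}) characterised by
   S(D f, e0) = rho(e0)(f). *)
Definition LWX2 (d : V1 -> V0) (rho : V0 -> A -> A) (S : E -> E -> A)
  (c00 : V0 -> V0 -> V0) (c01 : V0 -> V1 -> V1) (c10 : V1 -> V0 -> V1)
  (Om : V0 -> V0 -> V0 -> V1) (D : A -> V1) : Prop :=
  Alinear d /\
  (* rho is a bundle map E_0 -> TM: C^oo(M)-linear, valued in vector fields
     (R-linear derivations of C^oo(M)) *)
  (forall (a : A) e e' f, rho (a *: e + e') f = a * rho e f + rho e' f) /\
  (forall e (r : R) f g, rho e (r%:A * f + g) = r%:A * rho e f + rho e g) /\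
  (forall e f g, rho e (f * g) = f * rho e g + rho e f * g) /\
  (forall e e', S e e' = S e' e) /\
  (forall (a : A) e e' e'', S (a *: e + e') e'' = a * S e e'' + S e' e'') /\
  (forall e, (forall e', S e e' = 0) -> e = 0) /\
  (forall y y', S (in0 y) (in0 y') = 0) /\
  (forall x x', S (in1 x) (in1 x') = 0) /\
  (forall x y, Alinear (Om x y)) /\ (forall x z, Alinear (fun y => Om x y z)) /\
  (forall y z, Alinear (fun x => Om x y z)) /\
  (forall x y, Om x x y = 0) /\ (forall x y, Om x y y = 0) /\
  (forall x y, Om x y x = 0) /\
  (forall x y, c00 x y = - c00 y x) /\
  (forall f y, S (in1 (D f)) (in0 y) = rho y f) /\
  Leibniz2 d c00 c01 c10 Om /\
  (* (ii) *) (forall e : E,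
     circE c00 c01 c10 e e = in1 ((2^-1 : R)%:A *: D (S e e))) /\
  (* (iii) *) (forall x x', S (in0 (d x)) (in1 x') = S (in1 x) (in0 (d x'))) /\
  (* (iv) *) (forall e1 e2 e3 : E,
     rho e1.2 (S e2 e3) = S (circE c00 c01 c10 e1 e2) e3
                          + S e2 (circE c00 c01 c10 e1 e3)) /\
  (* (v) *) (forall y1 y2 y3 y4,
     S (in1 (Om y1 y2 y3)) (in0 y4) = - S (in0 y3) (in1 (Om y1 y2 y4))).

End LWX.
Arguments in1 {R A V1 V0} x.
Arguments in0 {R A V1 V0} y.

(* Pairing through S turns both identities into identities in C^oo(M); for the
   first one it suffices, by nondegeneracy of S, to pair its E_{-1}-component with
   an arbitrary section u of E_0.  Axioms (ii) and (iv) express S(y o m, z) and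
   S(m o y, z) through rho and S(m, -), and axioms (d), (e1), (iii), (v) show that
   rho(y o z) acts on such pairings as the commutator [rho(y), rho(z)].  After these
   reductions the first identity is the coherence axiom (f) paired with u, and the
   second one is axiom (d) for Omega(e^0_2, e^0_3, e^0_4) paired with e^1. *)

From HB Require Import structures.
From mathcomp Require Import all_boot all_order all_algebra.
From mathcomp Require Import ring.
Set Implicit Arguments.
Unset Strict Implicit.
Unset Printing Implicit Defensive.
Import GRing.Theory.
Local Open Scope ring_scope.

Section RlinearTheory.
Variables (R : realFieldType) (A : comAlgType R) (U W : lmodType A) (f : U -> W).

Lemma RlinearD : Rlinear f -> forall x y, f (x + y) = f x + f y.
Proof. by move=> lin_f x y; have := lin_f 1 x y; rewrite !scale1r. Qed.

Lemma Rlinear0 : Rlinear f -> f 0 = 0.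
Proof. by move=> lin_f; apply: (addrI (f 0)); rewrite -RlinearD // !addr0. Qed.

Lemma RlinearN : Rlinear f -> forall x, f (- x) = - f x.
Proof.
by move=> lin_f x; apply/eqP; rewrite -addr_eq0 -RlinearD // addNr Rlinear0.
Qed.

Lemma RlinearZ : Rlinear f -> forall (r : R) x, f (r%:A *: x) = r%:A *: f x.
Proof. by move=> lin_f r x; have := lin_f r x 0; rewrite Rlinear0 // !addr0. Qed.

Lemma Alinear_Rlinear : Alinear f -> Rlinear f.
Proof. by move=> lin_f r; apply: lin_f. Qed.

End RlinearTheory.

Section Injections.
Variables (R : realFieldType) (A : comAlgType R) (V1 V0 : lmodType A).

Lemma in1D (m n : V1) : in1 (m + n) = in1 m + in1 n :> V1 * V0.
Proof. by rewrite /in1; congr (_, _); rewrite addr0. Qed.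

Lemma in1N (m : V1) : in1 (- m) = - in1 m :> V1 * V0.
Proof. by rewrite /in1; congr (_, _); rewrite oppr0. Qed.

Lemma in1Z a (m : V1) : in1 (a *: m) = a *: in1 m :> V1 * V0.
Proof. by rewrite /in1; congr (_, _); rewrite scaler0. Qed.

Lemma in0D (y z : V0) : in0 (y + z) = in0 y + in0 z :> V1 * V0.
Proof. by rewrite /in0; congr (_, _); rewrite addr0. Qed.

Lemma in0N (y : V0) : in0 (- y) = - in0 y :> V1 * V0.
Proof. by rewrite /in0; congr (_, _); rewrite oppr0. Qed.

Lemma in0Z a (y : V0) : in0 (a *: y) = a *: in0 y :> V1 * V0.
Proof. by rewrite /in0; congr (_, _); rewrite scaler0. Qed.

Lemma in1_add_in0 (e : V1 * V0) : e = in1 e.1 + in0 e.2.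
Proof.
by case: e => m y; rewrite /in1 /in0; congr (_, _); rewrite /= (addr0, add0r).
Qed.

End Injections.

Lemma halfA_add_halfA (R : realFieldType) (A : comAlgType R) :
  (2^-1 : R)%:A + (2^-1 : R)%:A = 1 :> A.
Proof.
by rewrite -scalerDl -mulr2n -[_ *+ 2]mulr_natl mulfV ?scale1r // Num.Theory.pnatr_eq0.
Qed.

Lemma eq_lin_comb (Rg : comPzRingType) (a b c l r : Rg) :
  l = r -> a - b = c * (l - r) -> a = b.
Proof. by move=> ->; rewrite subrr mulr0 => /eqP; rewrite subr_eq0 => /eqP. Qed.

Section LWXIdentities.
Variables (R : realFieldType) (A : comAlgType R) (V1 V0 : lmodType A).
Variables (d : V1 -> V0) (rho : V0 -> A -> A) (S : (V1 * V0)%type -> (V1 * V0)%type -> A).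
Variables (c00 : V0 -> V0 -> V0) (c01 : V0 -> V1 -> V1) (c10 : V1 -> V0 -> V1).
Variables (Om : V0 -> V0 -> V0 -> V1) (D : A -> V1).

Hypotheses (rho_Alinear : forall (a : A) e e' f, rho (a *: e + e') f = a * rho e f + rho e' f)
  (rho_Rlinear : forall e (r : R) f g, rho e (r%:A * f + g) = r%:A * rho e f + rho e g).
Hypotheses (S_sym : forall e e', S e e' = S e' e)
  (S_Alinear : forall (a : A) e e' e'', S (a *: e + e') e'' = a * S e e'' + S e' e'')
  (S_nondeg : forall e, (forall e', S e e' = 0) -> e = 0)
  (S_iso0 : forall y y', S (in0 y) (in0 y') = 0)
  (S_iso1 : forall x x', S (in1 x) (in1 x') = 0).
Hypotheses (Om_Alinear3 : forall x y, Alinear (Om x y))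
  (Om_Alinear2 : forall x z, Alinear (fun y => Om x y z))
  (Om_Alinear1 : forall y z, Alinear (fun x => Om x y z))
  (Om_alt12 : forall x y, Om x x y = 0) (Om_alt23 : forall x y, Om x y y = 0).
Hypotheses (c00_skew : forall x y, c00 x y = - c00 y x)
  (S_D : forall f y, S (in1 (D f)) (in0 y) = rho y f).
Hypotheses (c00_Rlinear_r : forall x, Rlinear (c00 x))
  (c00_Rlinear_l : forall y, Rlinear (fun x => c00 x y))
  (c01_Rlinear_r : forall x, Rlinear (c01 x))
  (c10_Rlinear_l : forall x, Rlinear (fun m => c10 m x)).
Hypotheses (d_Om : forall x y z,
     d (Om x y z) = c00 x (c00 y z) - c00 (c00 x y) z - c00 y (c00 x z))
  (Om_d : forall x y m,
     Om x y (d m) = c01 x (c01 y m) - c01 (c00 x y) m - c01 y (c01 x m))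
  (Om_coherence : forall w x y z,
     c01 w (Om x y z) - c01 x (Om w y z) + c01 y (Om w x z) + c10 (Om w x y) z
     - Om (c00 w x) y z - Om x (c00 w y) z - Om x y (c00 w z)
     + Om w (c00 x y) z + Om w y (c00 x z) - Om w x (c00 y z) = 0).
Hypotheses (circE_diag : forall e : (V1 * V0)%type,
     circE c00 c01 c10 e e = in1 ((2^-1 : R)%:A *: D (S e e)))
  (S_d_sym : forall x x', S (in0 (d x)) (in1 x') = S (in1 x) (in0 (d x')))
  (rho_S_invariant : forall e1 e2 e3 : (V1 * V0)%type,
     rho e1.2 (S e2 e3) = S (circE c00 c01 c10 e1 e2) e3
                          + S e2 (circE c00 c01 c10 e1 e3))
  (S_Om_skew : forall y1 y2 y3 y4,
     S (in1 (Om y1 y2 y3)) (in0 y4) = - S (in0 y3) (in1 (Om y1 y2 y4))).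

Local Notation h := ((2^-1 : R)%:A : A).
Local Notation br := (brk c00 c01 c10).

Lemma rhoDl e e' f : rho (e + e') f = rho e f + rho e' f.
Proof. by have := rho_Alinear 1 e e' f; rewrite scale1r mul1r. Qed.

Lemma rho0l f : rho 0 f = 0.
Proof. by apply: (addrI (rho 0 f)); rewrite -rhoDl !addr0. Qed.

Lemma rhoNl e f : rho (- e) f = - rho e f.
Proof. by apply/eqP; rewrite -addr_eq0 -rhoDl addNr rho0l. Qed.

Lemma rhoZl a e f : rho (a *: e) f = a * rho e f.
Proof. by have := rho_Alinear a e 0 f; rewrite !addr0 rho0l addr0. Qed.

Lemma rhoDr e f g : rho e (f + g) = rho e f + rho e g.
Proof. by have := rho_Rlinear e 1 f g; rewrite scale1r !mul1r. Qed.

Lemma rho0r e : rho e 0 = 0.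
Proof. by apply: (addrI (rho e 0)); rewrite -rhoDr !addr0. Qed.

Lemma rhoNr e f : rho e (- f) = - rho e f.
Proof. by apply/eqP; rewrite -addr_eq0 -rhoDr addNr rho0r. Qed.

Lemma rhoZr e (r : R) f : rho e (r%:A * f) = r%:A * rho e f.
Proof. by have := rho_Rlinear e r f 0; rewrite !addr0 rho0r addr0. Qed.

Lemma SDl e e' e'' : S (e + e') e'' = S e e'' + S e' e''.
Proof. by have := S_Alinear 1 e e' e''; rewrite scale1r mul1r. Qed.

Lemma S0l e : S 0 e = 0.
Proof. by apply: (addrI (S 0 e)); rewrite -SDl !addr0. Qed.

Lemma SNl e e' : S (- e) e' = - S e e'.
Proof. by apply/eqP; rewrite -addr_eq0 -SDl addNr S0l. Qed.

Lemma SZl a e e' : S (a *: e) e' = a * S e e'.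
Proof. by have := S_Alinear a e 0 e'; rewrite !addr0 S0l addr0. Qed.

Lemma SDr e e' e'' : S e'' (e + e') = S e'' e + S e'' e'.
Proof. by rewrite S_sym SDl S_sym [S e' _]S_sym. Qed.

Definition pairing (m : V1) (z : V0) : A := S (in1 m) (in0 z).

Lemma S_decomp e e' : S e e' = pairing e.1 e'.2 + pairing e'.1 e.2.
Proof.
rewrite [in LHS](in1_add_in0 e) [in LHS](in1_add_in0 e') !SDl !SDr S_iso0 S_iso1.
by rewrite [S (in0 _) _]S_sym add0r addr0.
Qed.

Lemma pairingDl m n z : pairing (m + n) z = pairing m z + pairing n z.
Proof. by rewrite /pairing in1D SDl. Qed.

Lemma pairingNl m z : pairing (- m) z = - pairing m z.
Proof. by rewrite /pairing in1N SNl. Qed.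

Lemma pairingZl a m z : pairing (a *: m) z = a * pairing m z.
Proof. by rewrite /pairing in1Z SZl. Qed.

Lemma pairing0l z : pairing 0 z = 0.
Proof. by apply: (addrI (pairing 0 z)); rewrite -pairingDl !addr0. Qed.

Lemma pairingDr m y z : pairing m (y + z) = pairing m y + pairing m z.
Proof. by rewrite /pairing in0D SDr. Qed.

Lemma pairing0r m : pairing m 0 = 0.
Proof. by apply: (addrI (pairing m 0)); rewrite -pairingDr !addr0. Qed.

Lemma pairingNr m z : pairing m (- z) = - pairing m z.
Proof. by rewrite /pairing in0N S_sym SNl S_sym. Qed.

Lemma pairingZr a m z : pairing m (a *: z) = a * pairing m z.
Proof. by rewrite /pairing in0Z S_sym SZl S_sym. Qed.

Lemma pairing_eq0 m : (forall z, pairing m z = 0) -> m = 0.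
Proof.
move=> m0; suff /(congr1 fst) : in1 m = 0 :> V1 * V0 by [].
by apply: S_nondeg => e; rewrite S_decomp /= m0 pairing0r addr0.
Qed.

Lemma pairing_D f y : pairing (D f) y = rho y f.
Proof. exact: S_D. Qed.

Lemma pairing_d_sym m n : pairing m (d n) = pairing n (d m).
Proof. by rewrite /pairing S_sym S_d_sym. Qed.

Lemma pairing_Om_swap a b c e : pairing (Om a b c) e = - pairing (Om a b e) c.
Proof. by rewrite /pairing S_Om_skew S_sym. Qed.

Lemma D_additive f g : D (f + g) = D f + D g.
Proof.
apply/eqP; rewrite -subr_eq0; apply/eqP; apply: pairing_eq0 => z.
by rewrite !(pairingDl, pairingNl, pairing_D) rhoDr opprD addrACA !subrr addr0.
Qed.

Lemma c10_D_c01 m y : c10 m y = D (pairing m y) - c01 y m.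
Proof.
have /(congr1 fst) := circE_diag (m, y); rewrite /circE /= => diag.
apply/eqP; rewrite eq_sym subr_eq diag S_decomp /= D_additive.
by rewrite scalerDr -scalerDl halfA_add_halfA scale1r.
Qed.

Lemma circE_in1_in0 m y : circE c00 c01 c10 (in1 m) (in0 y) = in1 (c10 m y).
Proof.
by rewrite /circE /= (Rlinear0 (c01_Rlinear_r _)) (Rlinear0 (c00_Rlinear_l _)) addr0.
Qed.

Lemma circE_in0_in1 y m : circE c00 c01 c10 (in0 y) (in1 m) = in1 (c01 y m).
Proof.
by rewrite /circE /= (Rlinear0 (c10_Rlinear_l _)) (Rlinear0 (c00_Rlinear_r _)) add0r.
Qed.

Lemma circE_in0_in0 y z : circE c00 c01 c10 (in0 y) (in0 z) = in0 (c00 y z).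
Proof.
by rewrite /circE /= (Rlinear0 (c10_Rlinear_l _)) (Rlinear0 (c01_Rlinear_r _)) addr0.
Qed.

Lemma pairing_c01 y m z :
  pairing (c01 y m) z = rho y (pairing m z) - pairing m (c00 y z).
Proof.
have := rho_S_invariant (in0 y) (in1 m) (in0 z).
by rewrite circE_in0_in1 circE_in0_in0 => ->; rewrite addrK.
Qed.

Lemma pairing_c10 m y z : pairing (c10 m y) z
  = rho z (pairing m y) - rho y (pairing m z) + pairing m (c00 y z).
Proof.
by rewrite c10_D_c01 pairingDl pairingNl pairing_D pairing_c01 opprB addrCA addrC.
Qed.

Lemma OmDl a b y z : Om (a + b) y z = Om a y z + Om b y z.
Proof. exact: (RlinearD (Alinear_Rlinear (Om_Alinear1 y z))). Qed.

Lemma OmNl a y z : Om (- a) y z = - Om a y z.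
Proof. exact: (RlinearN (Alinear_Rlinear (Om_Alinear1 y z))). Qed.

Lemma OmZl (c : A) a y z : Om (c *: a) y z = c *: Om a y z.
Proof.
have := Om_Alinear1 y z c a 0.
by rewrite !addr0 (Rlinear0 (Alinear_Rlinear (Om_Alinear1 y z))) addr0.
Qed.

Lemma Om_swap12 a b c : Om a b c = - Om b a c.
Proof.
apply/eqP; rewrite -addr_eq0; apply/eqP.
rewrite -(Om_alt12 (a + b) c) OmDl !(RlinearD (Alinear_Rlinear (Om_Alinear2 _ _))).
by rewrite !Om_alt12 add0r addr0.
Qed.

Lemma Om_swap23 a b c : Om a b c = - Om a c b.
Proof.
apply/eqP; rewrite -addr_eq0 addrC; apply/eqP.
rewrite -(Om_alt23 a (b + c)) (RlinearD (Alinear_Rlinear (Om_Alinear3 _ _))).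
by rewrite !(RlinearD (Alinear_Rlinear (Om_Alinear2 _ _))) !Om_alt23 add0r addr0.
Qed.

Lemma Om_cycle a b c : Om a b c = Om c a b.
Proof. by rewrite Om_swap23 Om_swap12 opprK. Qed.

Lemma rho_c00 a b m c : rho (c00 a b) (pairing m c)
  = rho a (rho b (pairing m c)) - rho b (rho a (pairing m c)).
Proof.
(* Axiom (d) paired with [m] and axiom (e1) paired with [c], glued by (iii), (v). *)
have key := pairing_d_sym m (Om a b c).
rewrite pairing_Om_swap Om_d d_Om in key.
rewrite !(pairingDl, pairingNl, pairingDr, pairingNr, pairing_c01, rhoDr, rhoNr) in key.
by apply: (eq_lin_comb (c := -1) key); ring.
Qed.

Lemma brk_in1_in0 m y : br (in1 m) (in0 y) = in1 (h *: (c10 m y - c01 y m)).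
Proof. by rewrite /brk circE_in1_in0 circE_in0_in1 in1Z in1D in1N. Qed.

Lemma brk_in0_in1 y m : br (in0 y) (in1 m) = in1 (h *: (c01 y m - c10 m y)).
Proof. by rewrite /brk circE_in1_in0 circE_in0_in1 in1Z in1D in1N. Qed.

Lemma brk_in0_in0 y z : br (in0 y) (in0 z) = in0 (h *: (c00 y z - c00 z y)).
Proof. by rewrite /brk !circE_in0_in0 in0Z in0D in0N. Qed.

Lemma Om_bracket_identity y1 y2 y3 y4 :
  in1 (Om (br (in0 y1) (in0 y2)).2 y3 y4 - Om (br (in0 y1) (in0 y3)).2 y2 y4
       + Om (br (in0 y1) (in0 y4)).2 y2 y3 + Om (br (in0 y2) (in0 y3)).2 y1 y4
       - Om (br (in0 y2) (in0 y4)).2 y1 y3 + Om (br (in0 y3) (in0 y4)).2 y1 y2)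
  - br (in1 (Om y1 y2 y3)) (in0 y4) - br (in1 (Om y1 y3 y4)) (in0 y2)
  + br (in1 (Om y1 y2 y4)) (in0 y3) + br (in1 (Om y2 y3 y4)) (in0 y1)
  + in1 (D (S (in1 (Om y1 y2 y3)) (in0 y4))) = 0.
Proof.
(* Make all terms homogeneous of degree 1 in [h], so that no use of [h + h = 1]
   is left for [ring]. *)
have half_double (v : V1) : v = (h + h) *: v by rewrite halfA_add_halfA scale1r.
rewrite [D _]half_double !brk_in0_in0 !brk_in1_in0 /= -!in1N -!in1D.
apply: (congr1 in1); apply: pairing_eq0 => u.
have coh := congr1 (pairing^~ u) (Om_coherence y1 y2 y3 y4).
(* Bring the [c00]-argument of each [Om] to the front, as in the goal. *)
rewrite (Om_swap12 y2 (c00 y1 y3)) (Om_cycle y2 y3 (c00 y1 y4)) in coh.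
rewrite (Om_swap12 y1 (c00 y2 y3)) (Om_cycle y1 y3 (c00 y2 y4)) in coh.
rewrite (Om_cycle y1 y2 (c00 y3 y4)) pairing0l in coh.
rewrite !(pairingDl, pairingNl, pairing_c01, pairing_c10, OmNl) in coh.
rewrite (c00_skew y2 y1) (c00_skew y3 y1) (c00_skew y4 y1).
rewrite (c00_skew y3 y2) (c00_skew y4 y2) (c00_skew y4 y3).
rewrite -[S (in1 _) (in0 _)]/(pairing _ _).
rewrite !(OmZl, OmDl, OmNl, opprK, pairingDl, pairingNl, pairingZl).
rewrite !(pairing_D, pairing_c01, pairing_c10).
have Om134_2 : pairing (Om y1 y3 y4) y2 = pairing (Om y1 y2 y3) y4.
  by rewrite pairing_Om_swap Om_swap23 pairingNl opprK.
have Om124_3 : pairing (Om y1 y2 y4) y3 = - pairing (Om y1 y2 y3) y4.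
  exact: pairing_Om_swap.
have Om234_1 : pairing (Om y2 y3 y4) y1 = - pairing (Om y1 y2 y3) y4.
  by rewrite pairing_Om_swap (Om_cycle y2).
rewrite Om134_2 Om124_3 Om234_1 !rhoNr.
by apply: (eq_lin_comb (c := - (h + h)) coh); ring.
Qed.

Lemma jacobiator_identity x y2 y3 y4 :
  let J := Jac c00 c01 c10 in
  let bJ := S (J (in1 x) (in0 y2) (in0 y3)) (in0 y4)
            - S (J (in1 x) (in0 y2) (in0 y4)) (in0 y3)
            + S (J (in1 x) (in0 y3) (in0 y4)) (in0 y2)
            + 3%:R * S (in1 (Om (d x) y2 y3)) (in0 y4) in
  let bK := S (br (in1 x) (in0 y2)) (br (in0 y3) (in0 y4))
            - S (br (in1 x) (in0 y3)) (br (in0 y2) (in0 y4))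
            + S (br (in1 x) (in0 y4)) (br (in0 y2) (in0 y3)) in
  2%:R * bJ + bK = - S (in1 (Om (d x) y2 y3)) (in0 y4).
Proof.
move=> J bJ bK; rewrite /bJ /bK /J /Jac.
rewrite !(brk_in1_in0, brk_in0_in1, brk_in0_in0) -!in1D.
rewrite -![S (in1 _) (in0 _)]/(pairing _ _).
rewrite !(pairingDl, pairingNl, pairingZl, pairing_c01, pairing_c10).
rewrite (c00_skew y3 y2) (c00_skew y4 y2) (c00_skew y4 y3).
rewrite !(RlinearD (c00_Rlinear_l _), RlinearN (c00_Rlinear_l _), RlinearZ (c00_Rlinear_l _)).
rewrite !(RlinearD (c00_Rlinear_r _), RlinearN (c00_Rlinear_r _), RlinearZ (c00_Rlinear_r _)).
rewrite !(pairingDr, pairingNr, pairingZr, rhoDl, rhoNl, rhoZl, rhoDr, rhoNr, rhoZr).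
rewrite !(c00_skew (c00 _ _) _) !(pairingNr, rhoNr) !rho_c00.
have dOm : pairing x (d (Om y2 y3 y4)) = - pairing (Om (d x) y2 y3) y4.
  by rewrite pairing_d_sym pairing_Om_swap Om_swap23 Om_swap12 opprK.
rewrite d_Om !(pairingDr, pairingNr) (c00_skew (c00 _ _) _) pairingNr in dOm.
(* Homogenize to degree 2 in [h]; the coefficient 28 of [pairing (Om (d x) y2 y3) y4]
   then comes from 2 * 3 * 4 + 4. *)
have half_sq f : f = (h + h) * ((h + h) * f) by rewrite halfA_add_halfA !mul1r.
rewrite [pairing (Om (d x) y2 y3) y4]half_sq.
by apply: (eq_lin_comb (c := 28%:R * h * h) dOm); ring.
Qed.

End LWXIdentities.

Theorem mainTheorem5 (R : realFieldType) (A : comAlgType R) (V1 V0 : lmodType A)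
  (d : V1 -> V0) (rho : V0 -> A -> A) (S : (V1 * V0)%type -> (V1 * V0)%type -> A)
  (c00 : V0 -> V0 -> V0) (c01 : V0 -> V1 -> V1) (c10 : V1 -> V0 -> V1)
  (Om : V0 -> V0 -> V0 -> V1) (D : A -> V1) :
  LWX2 d rho S c00 c01 c10 Om D ->
  forall (x : V1) (y1 y2 y3 y4 : V0),
  let br := brk c00 c01 c10 in
  let J := Jac c00 c01 c10 in
  (in1 (Om (br (in0 y1) (in0 y2)).2 y3 y4 - Om (br (in0 y1) (in0 y3)).2 y2 y4
        + Om (br (in0 y1) (in0 y4)).2 y2 y3 + Om (br (in0 y2) (in0 y3)).2 y1 y4
        - Om (br (in0 y2) (in0 y4)).2 y1 y3 + Om (br (in0 y3) (in0 y4)).2 y1 y2)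
   - br (in1 (Om y1 y2 y3)) (in0 y4) - br (in1 (Om y1 y3 y4)) (in0 y2)
   + br (in1 (Om y1 y2 y4)) (in0 y3) + br (in1 (Om y2 y3 y4)) (in0 y1)
   + in1 (D (S (in1 (Om y1 y2 y3)) (in0 y4))) = 0)
  /\
  (let bJ := S (J (in1 x) (in0 y2) (in0 y3)) (in0 y4)
             - S (J (in1 x) (in0 y2) (in0 y4)) (in0 y3)
             + S (J (in1 x) (in0 y3) (in0 y4)) (in0 y2)
             + 3%:R * S (in1 (Om (d x) y2 y3)) (in0 y4) in
   let bK := S (br (in1 x) (in0 y2)) (br (in0 y3) (in0 y4))
             - S (br (in1 x) (in0 y3)) (br (in0 y2) (in0 y4))
             + S (br (in1 x) (in0 y4)) (br (in0 y2) (in0 y3)) in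
   2%:R * bJ + bK = - S (in1 (Om (d x) y2 y3)) (in0 y4)).
Proof.
move=> [_ [rhoA [rhoR [_ [Ssym [SA [Snd [S00 [S11 [OmA3 [OmA2 [OmA1 [Om12 [Om23
  [_ [c00sk [HD [HL [Hii [Hiii [Hiv Hv]]]]]]]]]]]]]]]]]]]]].
case: HL => [_ [c00r [c00l [c01r [_ [_ [c10l [_ [_ [_
  [_ [_ [_ [Hd [He1 [_ [_ Hf]]]]]]]]]]]]]]]]].
move=> x y1 y2 y3 y4 br J; split.
  exact: (Om_bracket_identity rhoR Ssym SA Snd S00 S11 OmA3 OmA2 OmA1 Om12 Om23
    c00sk HD c00r c00l c01r c10l Hf Hii Hiv Hv).
exact: (jacobiator_identity rhoA rhoR Ssym SA Snd S00 S11 OmA3 OmA2 OmA1 Om12 Om23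
  c00sk HD c00r c00l c01r c10l Hd He1 Hii Hiii Hiv Hv).
Qed.
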